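(* Let $Q_1(\cdot\mid X)$ and $Q_2(\cdot\mid X)$ be conditional CDFs and define $Z_{Q_j}:=Q_j^{-1}(\Pi(Z\mid X)\mid X)$ for $j\in\{1,2\}$. Under monotonicity (for all $z'>z$, $A^{z'}\ge A^z$ with probability 1): if $Q_1$ stochastically dominates $Q_2$ (i.e. $Q_1(z\mid X)\le Q_2(z\mid X)$ for all $z$), then $\mathbb{P}[A^{Z_{Q_1}}\ge A^{Z_{Q_2}}]=1$; and if $Q_1$ is stochastically dominated by $Q_2$, then $\mathbb{P}[A^{Z_{Q_1}}\le A^{Z_{Q_2}}]=1$.
   Context: Covariates $X$, continuous instrument $Z\in\mathbb{R}$ with conditional CDF $\Pi(z\mid X)=P(Z\le z\mid X)$, binary treatment $A$. $A^z$ is the potential treatment had the instrument been set to $z$; for a random value $W$, $A^W$ is $A^z$ evaluated at $z=W$. $Q^{-1}(p\mid X)=\inf\{z:Q(z\mid X)\ge p\}$. *)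

From HB Require Import structures.
From mathcomp Require Import all_boot all_order all_algebra.
From mathcomp Require Import all_classical all_reals all_analysis.
Set Implicit Arguments. Unset Strict Implicit. Unset Printing Implicit Defensive.
Import Order.TTheory GRing.Theory Num.Theory.
Import numFieldNormedType.Exports.
Local Open Scope classical_set_scope.
Local Open Scope ring_scope.

Definition is_cdf {R : realType} (F : R -> R) : Prop :=
  [/\ {homo F : x y / x <= y},
      (forall x, F y @[y --> x^'+] --> F x),
      F x @[x --> -oo] --> (0 : R) &
      F x @[x --> +oo] --> (1 : R)].

Definition is_cond_cdf {R : realType} {TX : Type} (Q : R -> TX -> R) : Prop :=
  forall x, is_cdf (fun z => Q z x).

Definition qinv {R : realType} {TX : Type} (Q : R -> TX -> R) (p : R) (x : TX) : R :=
  inf [set z : R | p <= Q z x].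

Definition ZQ {R : realType} {TX T : Type} (Q Pi : R -> TX -> R)
  (X : T -> TX) (Z : T -> R) (w : T) : R :=
  qinv Q (Pi (Z w) (X w)) (X w).

From HB Require Import structures.
From mathcomp Require Import all_boot all_order all_algebra.
From mathcomp Require Import all_classical all_reals all_analysis.
Import Order.TTheory GRing.Theory Num.Theory.
Local Open Scope classical_set_scope.
Local Open Scope ring_scope.

(* If Q1 <= Q2 pointwise then every level set {z | p <= Q1 z} is contained in
   the corresponding level set of Q2, so the quantile of Q2 (an infimum over a
   larger set) is at most that of Q1.  For 0 < p < 1 both infima are genuine:
   the sets are nonempty (Q -> 1 at +oo) and bounded below (Q -> 0 at -oo).
   Monotonicity of z |-> A^z then compares the treatments at the two quantiles.
   Only 0 < Pi(Z | X) < 1 is used about Pi, not that Pi is a CDF. *)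

Lemma inf_le_subset (R : realType) (A B : set R) :
  B `<=` A -> B !=set0 -> has_lbound A -> inf A <= inf B.
Proof.
move=> BA B0 Alb; apply: lb_le_inf B0 _ => z Bz.
exact: ge_inf Alb _ (BA _ Bz).
Qed.

Section CdfLevelSets.
Variables (R : realType) (F : R -> R).
Hypothesis F_cdf : is_cdf F.

Lemma cdf_ge_neq0 (p : R) : p < 1 -> [set z | p <= F z] !=set0.
Proof.
case: F_cdf => _ _ _ F1 p1.
have [z Fz] := filter_ex (cvgr_gt _ F1 _ p1).
by exists z; exact: ltW.
Qed.

Lemma cdf_ge_has_lbound (p : R) : 0 < p -> has_lbound [set z | p <= F z].
Proof.
case: F_cdf => F_homo _ F0 _ p0.
have [z0 Fz0] := filter_ex (cvgr_lt _ F0 _ p0).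
exists z0 => z /= pFz; rewrite leNgt; apply/negP => zz0.
have := F_homo _ _ (ltW zz0); rewrite leNgt => /negP; apply.
exact: lt_le_trans Fz0 pFz.
Qed.

End CdfLevelSets.

Lemma qinv_le_dominated (R : realType) (TX : Type) (Q1 Q2 : R -> TX -> R)
    (p : R) (x : TX) :
  is_cdf (Q1^~ x) -> is_cdf (Q2^~ x) -> 0 < p < 1 ->
  (forall z, Q1 z x <= Q2 z x) -> qinv Q2 p x <= qinv Q1 p x.
Proof.
move=> Q1_cdf Q2_cdf /andP[p0 p1] Q12.
apply: inf_le_subset; last exact: cdf_ge_has_lbound.
- by move=> z /= pQ1z; exact: le_trans pQ1z (Q12 z).
- exact: cdf_ge_neq0.
Qed.

Lemma nondecreasing_bool_le (R : realType) (a : R -> bool) (y x : R) :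
  (forall z z' : R, z < z' -> (a z <= a z')%N) -> y <= x -> (a y <= a x)%N.
Proof. by move=> a_homo; rewrite le_eqVlt => /predU1P[->|/a_homo]. Qed.

Lemma ae_treatment_ZQ_dominated (R : realType) (d : measure_display)
    (T : measurableType d) (P : probability T R) (TX : Type) (X : T -> TX)
    (Z : T -> R) (A : R -> T -> bool) (Pi Q1 Q2 : R -> TX -> R) :
  is_cond_cdf Q1 -> is_cond_cdf Q2 ->
  {ae P, forall w, 0 < Pi (Z w) (X w) < 1} ->
  {ae P, forall w, forall z z' : R, z < z' -> (A z w <= A z' w)%N} ->
  {ae P, forall w, forall z : R, Q1 z (X w) <= Q2 z (X w)} ->
  {ae P, forall w, (A (ZQ Q2 Pi X Z w) w <= A (ZQ Q1 Pi X Z w) w)%N}.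
Proof.
move=> Q1_cdf Q2_cdf Pi01 A_homo Q12.
apply: filterS3 Pi01 A_homo Q12 => w Piw Aw Q12w.
apply: nondecreasing_bool_le Aw _.
exact: qinv_le_dominated (Q1_cdf (X w)) (Q2_cdf (X w)) Piw Q12w.
Qed.

Theorem proposition4 (R : realType) (d : measure_display) (T : measurableType d)
  (P : probability T R) (TX : Type) (X : T -> TX) (Z : T -> R)
  (A : R -> T -> bool) (Pi Q1 Q2 : R -> TX -> R) :
  is_cond_cdf Pi -> is_cond_cdf Q1 -> is_cond_cdf Q2 ->
  {ae P, forall w, 0 < Pi (Z w) (X w) < 1} ->
  {ae P, forall w, forall z z' : R, z < z' -> (A z w <= A z' w)%N} ->
  ({ae P, forall w, forall z : R, Q1 z (X w) <= Q2 z (X w)} ->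
     {ae P, forall w, (A (ZQ Q2 Pi X Z w) w <= A (ZQ Q1 Pi X Z w) w)%N})
  /\
  ({ae P, forall w, forall z : R, Q2 z (X w) <= Q1 z (X w)} ->
     {ae P, forall w, (A (ZQ Q1 Pi X Z w) w <= A (ZQ Q2 Pi X Z w) w)%N}).
Proof.
move=> _ Q1_cdf Q2_cdf Pi01 A_homo.
by split; apply: ae_treatment_ZQ_dominated.
Qed.
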